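(* Let $n,r\geq 1$ with $\gcd(n,r)>1$. Then for every $q\geq 1$, $n$ prisoners do not have a symmetric winning strategy in the prisoners-and-rooms game with $r$ rooms and $q$ states, starting with all rooms in state $0$.
   Context: The game: there are $n$ prisoners and $r$ rooms; each room contains a switch that is in one of $q$ states $\{0,1,\ldots,q-1\}$. The initial state of every room is known to the prisoners. A warden leads prisoners into rooms one at a time according to a schedule, i.e. an infinite sequence of (prisoner, room) pairs; a schedule is valid if every prisoner visits every room infinitely often. The rooms are indistinguishable to the prisoners, and prisoners have no information about time or other visits: on each visit a prisoner observes only the current state of the room, may change it to any state, and may declare that all prisoners have visited all rooms. A (deterministic) strategy assigns to each prisoner a rule determining, from the sequence of states that prisoner has observed so far (and their own previous actions), what new state to set and whether to declare. A strategy is winning if for every valid schedule some prisoner eventually declares, and every declaration is made only at a time when every prisoner has already visited every room. A strategy is symmetric if all prisoners follow the same rule (the same function of their own observation history). *)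

From mathcomp Require Import all_boot.
Set Implicit Arguments. Unset Strict Implicit. Unset Printing Implicit Defensive.

(* A symmetric deterministic strategy: a single rule applied by every prisoner.
   Its argument is the sequence of states the prisoner has observed so far,
   in chronological order, INCLUDING the state observed at the current visit
   (the last element).  Since the strategy is deterministic, the prisoner's own
   previous actions are functions of its earlier observations, so this is no
   loss of generality.  The output is the new state to set and whether to
   declare. *)
Definition sym_strategy (q : nat) := seq 'I_q -> 'I_q * bool.

Definition schedule (n r : nat) := nat -> 'I_n * 'I_r.

Definition valid_schedule n r (sched : schedule n r) : Prop :=
  forall (p : 'I_n) (k : 'I_r) (t : nat), exists t', t <= t' /\ sched t' = (p, k).

(* Configuration BEFORE the visit at time t:
   the current state of every room, and the observation history of every prisoner. *)
Fixpoint config n r q (init : 'I_r -> 'I_q) (S : sym_strategy q)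
    (sched : schedule n r) (t : nat) : ('I_r -> 'I_q) * ('I_n -> seq 'I_q) :=
  match t with
  | 0 => (init, fun _ => [::])
  | t'.+1 =>
      let: (rooms, hists) := config init S sched t' in
      let: (p, k) := sched t' in
      let h := rcons (hists p) (rooms k) in
      let s := (S h).1 in
      (fun k' => if k' == k then s else rooms k',
       fun p' => if p' == p then h else hists p')
  end.

Definition declares n r q (init : 'I_r -> 'I_q) (S : sym_strategy q)
    (sched : schedule n r) (t : nat) : bool :=
  let: (rooms, hists) := config init S sched t in
  let: (p, k) := sched t in
  (S (rcons (hists p) (rooms k))).2.

Definition all_visited n r (sched : schedule n r) (t : nat) : Prop :=
  forall (p : 'I_n) (k : 'I_r), exists t', t' <= t /\ sched t' = (p, k).

Definition winning n r q (init : 'I_r -> 'I_q) (S : sym_strategy q) : Prop :=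
  forall sched : schedule n r, valid_schedule sched ->
    (exists t, declares init S sched t) /\
    (forall t, declares init S sched t -> all_visited sched t).

From mathcomp Require Import all_boot.
Set Implicit Arguments. Unset Strict Implicit.

(* Let d = gcd(n, r) > 1 and split the prisoners and the rooms into consecutive
   blocks of size d.  In a round, a block of prisoners visits a block of rooms
   along a perfect matching (prisoner j of the block enters room j + s mod d).
   By induction on rounds, all prisoners of a block have the same history and
   all rooms of a block have the same state, so the run of a symmetric strategy
   does not depend on the shifts s.  A schedule that cycles through all blocks
   and shifts is valid, so the strategy declares at some time t; replaying the
   same rounds with shift 0 up to t, and then continuing with the valid
   schedule, yields a valid schedule on which the strategy declares at t
   although prisoner 0 has only visited rooms whose index is 0 mod d. *)

Lemma mulnD_eq_divmod d a x k :
  x < d -> (a * d + x == k) = (k %/ d == a) && (k %% d == x).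
Proof.
move=> lt_xd; have d_gt0 : 0 < d by apply: leq_ltn_trans lt_xd.
apply/eqP/andP => [<- | [/eqP <- /eqP <-]]; last by rewrite -divn_eq.
by rewrite divnMDl // divn_small // addn0 modnMDl modn_small.
Qed.

Lemma divn_mulnD_small d b j : j < d -> (b * d + j) %/ d = b.
Proof. by move=> lt_jd; rewrite divnMDl ?divn_small ?addn0 // (leq_ltn_trans _ lt_jd). Qed.

Lemma modn_mulnD_small d b j : j < d -> (b * d + j) %% d = j.
Proof. by move=> lt_jd; rewrite modnMDl modn_small. Qed.

Lemma modn_shiftK d s x : s <= d -> ((x + s) %% d + (d - s)) %% d = x %% d.
Proof. by move=> le_sd; rewrite modnDml -addnA subnKC // modnDr. Qed.

Lemma modn_unshiftK d s x : s <= d -> ((x + (d - s)) %% d + s) %% d = x %% d.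
Proof. by move=> le_sd; rewrite modnDml -addnA subnK // modnDr. Qed.

Lemma modn_unshift_eq d s c j :
  s <= d -> c < d -> j < d -> ((c + (d - s)) %% d == j) = (c == (j + s) %% d).
Proof.
move=> le_sd lt_cd lt_jd; apply/eqP/eqP => [<- | ->].
  by rewrite modn_unshiftK // modn_small.
by rewrite modn_shiftK // modn_small.
Qed.

Lemma exists_mixed_radix m l d i k s T :
  i < m -> k < l -> s < d ->
  exists2 b, T <= b & [/\ b %% m = i, b %/ m %% l = k & b %/ (m * l) %% d = s].
Proof.
move=> lt_im lt_kl lt_sd.
have m_gt0 : 0 < m by apply: leq_ltn_trans lt_im.
have l_gt0 : 0 < l by apply: leq_ltn_trans lt_kl.
have d_gt0 : 0 < d by apply: leq_ltn_trans lt_sd.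
have le_mulD x y c : 0 < c -> x <= x * c + y.
  by move=> c_gt0; apply: leq_trans (leq_addr _ _); rewrite leq_pmulr.
exists (((T * d + s) * l + k) * m + i).
  apply: leq_trans (le_mulD _ _ _ m_gt0); apply: leq_trans (le_mulD _ _ _ l_gt0).
  exact: le_mulD.
rewrite modn_mulnD_small // divn_mulnD_small // modn_mulnD_small //.
by rewrite divnMA !divn_mulnD_small // modn_mulnD_small.
Qed.

Lemma leq_mulSn_block d x c : x < c -> x * d + d <= c * d.
Proof. by move=> lt_xc; rewrite addnC -mulSn leq_mul2r lt_xc orbT. Qed.

Lemma valid_schedule_splice n r (s1 s2 : schedule n r) t :
  valid_schedule s2 -> valid_schedule (fun t' => if t' <= t then s1 t' else s2 t').
Proof.
move=> valid2 p k T; have [t' [le_Tt' s2_t']] := valid2 p k (maxn T t.+1).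
exists t'; split; first by apply: leq_trans le_Tt'; rewrite leq_maxl.
by rewrite leqNgt (leq_trans _ le_Tt') // leq_maxr.
Qed.

Section Run.

Variables (n r q : nat) (init : 'I_r -> 'I_q) (S : sym_strategy q).

Definition visit_history (sched : schedule n r) t : seq 'I_q :=
  rcons ((config init S sched t).2 (sched t).1)
        ((config init S sched t).1 (sched t).2).

Lemma config_roomS sched t k :
  (config init S sched t.+1).1 k =
  if k == (sched t).2 then (S (visit_history sched t)).1
  else (config init S sched t).1 k.
Proof. by rewrite /visit_history /=; case: config; case: sched. Qed.

Lemma config_histS sched t p :
  (config init S sched t.+1).2 p =
  if p == (sched t).1 then visit_history sched t
  else (config init S sched t).2 p.
Proof. by rewrite /visit_history /=; case: config; case: sched. Qed.

Lemma declaresE sched t : declares init S sched t = (S (visit_history sched t)).2.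
Proof. by rewrite /declares /visit_history; case: config; case: sched. Qed.

Lemma config_prefix (s1 s2 : schedule n r) t :
  (forall t', t' < t -> s1 t' = s2 t') -> config init S s1 t = config init S s2 t.
Proof.
elim: t => [|t IH] eq_s //=.
by rewrite IH => [|t' lt_t't]; rewrite ?eq_s // ltnW.
Qed.

Lemma declares_prefix (s1 s2 : schedule n r) t :
  (forall t', t' <= t -> s1 t' = s2 t') -> declares init S s1 t = declares init S s2 t.
Proof.
move=> eq_s; rewrite !declaresE /visit_history eq_s //.
by rewrite (@config_prefix s1 s2) // => t' /ltnW; apply: eq_s.
Qed.

End Run.

Section BlockSchedule.

Variables (n r q d : nat) (z : 'I_q) (S : sym_strategy q) (I K Sh : nat -> nat).
Hypotheses (d_gt0 : 0 < d) (I_bound : forall b, I b * d + d <= n.+1)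
  (K_bound : forall b, K b * d + d <= r.+1) (Sh_bound : forall b, Sh b <= d).

(* Round b occupies the times b * d + j, j < d: prisoner j of block I b enters
   room j + Sh b (mod d) of block K b. *)
Definition block_schedule : schedule n.+1 r.+1 := fun t =>
  (inord (I (t %/ d) * d + t %% d),
   inord (K (t %/ d) * d + (t %% d + Sh (t %/ d)) %% d)).

Definition visitor_slot b (k : nat) := (k %% d + (d - Sh b)) %% d.

Lemma block_prisoner_eq t (p : 'I_n.+1) :
  ((block_schedule t).1 == p) = (p %/ d == I (t %/ d)) && (p %% d == t %% d).
Proof.
have lt_td := ltn_pmod t d_gt0.
rewrite -val_eqE /= inordK ?mulnD_eq_divmod //.
by apply: leq_trans _ (I_bound (t %/ d)); rewrite ltn_add2l.
Qed.

Lemma block_room_eq t (k : 'I_r.+1) :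
  ((block_schedule t).2 == k) =
  (k %/ d == K (t %/ d)) && (visitor_slot (t %/ d) k == t %% d).
Proof.
have lt_sd : (t %% d + Sh (t %/ d)) %% d < d by rewrite ltn_pmod.
rewrite -val_eqE /= inordK; last first.
  by apply: leq_trans _ (K_bound (t %/ d)); rewrite ltn_add2l.
rewrite mulnD_eq_divmod // /visitor_slot.
by rewrite (modn_unshift_eq (Sh_bound _) (ltn_pmod _ d_gt0) (ltn_pmod _ d_gt0)).
Qed.

Lemma block_visitor t :
  [/\ (block_schedule t).1 %/ d = I (t %/ d), (block_schedule t).1 %% d = t %% d,
      (block_schedule t).2 %/ d = K (t %/ d)
    & visitor_slot (t %/ d) (block_schedule t).2 = t %% d].
Proof.
have /andP[/eqP p_blk /eqP p_slot] := etrans (esym (block_prisoner_eq t _)) (eqxx _).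
have /andP[/eqP k_blk /eqP k_slot] := etrans (esym (block_room_eq t _)) (eqxx _).
by [].
Qed.

(* The run of the strategy on blocks: block c of rooms has state
   (reduced_config b).1 c and block c of prisoners has history
   (reduced_config b).2 c before round b.  The shifts Sh do not occur. *)
Fixpoint reduced_config b : (nat -> 'I_q) * (nat -> seq 'I_q) :=
  if b is b'.+1 then
    let: RH := reduced_config b' in
    let: h := rcons (RH.2 (I b')) (RH.1 (K b')) in
    (fun c => if c == K b' then (S h).1 else RH.1 c,
     fun c => if c == I b' then h else RH.2 c)
  else (fun _ => z, fun _ => [::]).

Definition reduced_history b :=
  rcons ((reduced_config b).2 (I b)) ((reduced_config b).1 (K b)).

Local Notation run := (config (fun _ => z) S block_schedule).

(* The invariant: the configuration after the first j visits of round b. *)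
Definition round_spec b j (c : ('I_r.+1 -> 'I_q) * ('I_n.+1 -> seq 'I_q)) :=
  (forall k : 'I_r.+1, c.1 k =
     if (k %/ d == K b) && (visitor_slot b k < j) then (S (reduced_history b)).1
     else (reduced_config b).1 (k %/ d)) /\
  (forall p : 'I_n.+1, c.2 p =
     if (p %/ d == I b) && (p %% d < j) then reduced_history b
     else (reduced_config b).2 (p %/ d)).

Lemma visit_history_round b j :
  j < d -> round_spec b j (run (b * d + j)) ->
  visit_history (fun _ => z) S block_schedule (b * d + j) = reduced_history b.
Proof.
move=> lt_jd [rooms hists]; rewrite /visit_history rooms hists.
have [] := block_visitor (b * d + j); rewrite divn_mulnD_small // modn_mulnD_small //.
by move=> -> -> -> ->; rewrite ltnn !eqxx.
Qed.

Lemma round_spec_step b j :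
  j < d -> round_spec b j (run (b * d + j)) -> round_spec b j.+1 (run (b * d + j).+1).
Proof.
move=> lt_jd spec; have visit := visit_history_round lt_jd spec.
case: spec => [rooms hists]; split=> [k | p].
  rewrite config_roomS visit eq_sym block_room_eq rooms.
  rewrite divn_mulnD_small // modn_mulnD_small // ltnS (leq_eqVlt (visitor_slot b k)).
  by case: (_ == K b); case: (_ == j); case: (_ < j).
rewrite config_histS visit eq_sym block_prisoner_eq hists.
rewrite divn_mulnD_small // modn_mulnD_small // ltnS (leq_eqVlt (p %% d)).
by case: (_ == I b); case: (_ == j); case: (_ < j).
Qed.

Lemma round_spec_upto b j :
  round_spec b 0 (run (b * d)) -> j <= d -> round_spec b j (run (b * d + j)).
Proof.
move=> spec0; elim: j => [|j IH] le_jd; first by rewrite addn0.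
by rewrite addnS; apply: round_spec_step => //; apply: IH; apply: ltnW.
Qed.

Lemma round_spec_start b : round_spec b 0 (run (b * d)).
Proof.
elim: b => [|b IH]; first by split=> ? /=; rewrite andbF.
have [rooms hists] := round_spec_upto IH (leqnn d).
rewrite mulSn addnC; split=> [k | p].
  by rewrite rooms ltn_pmod // andbT ltn0 andbF.
by rewrite hists ltn_pmod // andbT ltn0 andbF.
Qed.

Lemma declares_block_schedule t :
  declares (fun _ => z) S block_schedule t = (S (reduced_history (t %/ d))).2.
Proof.
have lt_td := ltn_pmod t d_gt0.
have spec := round_spec_upto (round_spec_start (t %/ d)) (ltnW lt_td).
have := visit_history_round lt_td spec.
by rewrite -divn_eq declaresE => ->.
Qed.

Lemma block_schedule_valid m l :
  n.+1 = m * d -> r.+1 = l * d ->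
  (forall i k s T, i < m -> k < l -> s < d ->
     exists2 b, T <= b & [/\ I b = i, K b = k & Sh b = s]) ->
  valid_schedule block_schedule.
Proof.
move=> Em El onto p k T.
have lt_pd := ltn_pmod p d_gt0; have lt_kd := ltn_pmod k d_gt0.
have lt_shift := ltn_pmod (k %% d + (d - p %% d)) d_gt0.
have [||b le_Tb [Ib Kb Shb]] := onto (p %/ d) (k %/ d) _ T _ _ lt_shift.
- by rewrite ltn_divLR // -Em.
- by rewrite ltn_divLR // -El.
exists (b * d + p %% d); split.
  by apply: leq_trans le_Tb _; apply: leq_trans (leq_addr _ _); rewrite leq_pmulr.
rewrite [LHS]surjective_pairing; apply/eqP.
rewrite xpair_eqE block_prisoner_eq block_room_eq (divn_mulnD_small _ lt_pd).
rewrite (modn_mulnD_small _ lt_pd) Ib Kb !eqxx /visitor_slot Shb.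
rewrite (modn_unshift_eq (ltnW lt_shift) lt_kd lt_pd) [p %% d + _]addnC.
by rewrite modn_unshiftK ?modn_mod ?eqxx // ltnW.
Qed.

End BlockSchedule.

Lemma declares_block_schedule_shift n r q d (z : 'I_q) S I K Sh1 Sh2 :
  0 < d -> (forall b, I b * d + d <= n.+1) -> (forall b, K b * d + d <= r.+1) ->
  (forall b, Sh1 b <= d) -> (forall b, Sh2 b <= d) -> forall t,
  declares (fun=> z) S (block_schedule n r d I K Sh1) t =
  declares (fun=> z) S (block_schedule n r d I K Sh2) t.
Proof.
by move=> d_gt0 I_bound K_bound Sh1_bound Sh2_bound t; rewrite !declares_block_schedule.
Qed.

Lemma block_schedule0_slot n r d I K :
  0 < d -> (forall b, I b * d + d <= n.+1) -> (forall b, K b * d + d <= r.+1) -> forall t,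
  (block_schedule n r d I K (fun=> 0) t).1 %% d =
  (block_schedule n r d I K (fun=> 0) t).2 %% d.
Proof.
move=> d_gt0 I_bound K_bound t.
have [_ -> _] := block_visitor d_gt0 I_bound K_bound (fun=> leq0n d) t.
by rewrite /visitor_slot subn0 modnDr modn_mod => ->.
Qed.

Theorem mainTheorem6 (n r q : nat) (hn : 1 <= n) (hr : 1 <= r)
    (hgcd : 1 < gcdn n r) (hq : 1 <= q) :
  ~ exists S : sym_strategy q,
      @winning n r q (fun _ : 'I_r => Ordinal hq) S.
Proof.
move=> [S win]; case: n hn hgcd win => [|n] // _; case: r hr => [|r] // _ hgcd win.
set d := gcdn n.+1 r.+1 in hgcd; have d_gt0 : 0 < d := ltnW hgcd.
have /dvdnP[m Em] : d %| n.+1 := dvdn_gcdl _ _.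
have /dvdnP[l El] : d %| r.+1 := dvdn_gcdr _ _.
have [m_gt0 l_gt0] : 0 < m /\ 0 < l by split; [case: m Em | case: l El].
pose I b := b %% m; pose K b := b %/ m %% l; pose Sh b := b %/ (m * l) %% d.
have I_bound b : I b * d + d <= n.+1 by rewrite Em leq_mulSn_block ?ltn_pmod.
have K_bound b : K b * d + d <= r.+1 by rewrite El leq_mulSn_block ?ltn_pmod.
have Sh_bound b : Sh b <= d by rewrite ltnW ?ltn_pmod.
pose sched := block_schedule n r d I K Sh.
pose sched0 := block_schedule n r d I K (fun=> 0).
have valid_sched : valid_schedule sched.
  apply: (block_schedule_valid d_gt0 I_bound K_bound Sh_bound Em El).
  move=> i k s T lt_im lt_kl lt_sd.
  by have [b] := exists_mixed_radix T lt_im lt_kl lt_sd; exists b.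
have [[t decl_t] _] := win sched valid_sched.
pose sched1 t' := if t' <= t then sched0 t' else sched t'.
have decl1 : declares (fun=> Ordinal hq) S sched1 t.
  rewrite (@declares_prefix _ _ _ _ S sched1 sched0) => [|t' le_t't].
    have shift_free := declares_block_schedule_shift (Ordinal hq) S d_gt0 I_bound K_bound.
    by rewrite (shift_free _ _ (fun=> leq0n d) Sh_bound).
  by rewrite /sched1 le_t't.
have [t' [le_t't]] := (win sched1 (valid_schedule_splice sched0 t valid_sched)).2
  t decl1 ord0 (inord 1).
rewrite /sched1 le_t't => sched0_t'.
have := block_schedule0_slot d_gt0 I_bound K_bound t'.
rewrite -/sched0 sched0_t' /= mod0n inordK ?modn_small //.
by apply: leq_trans hgcd _; rewrite El leq_pmull.
Qed.
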